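(* For $p=2$, \[ F_0(q)= \frac14 \sum_{\mathbf n \in \mathbb{Z}^2} \left(12 n_1 n_2-3n_1^2-3n_2^2-n_1-n_2\right) q^{ 2 Q\left(\mathbf n-\left(\frac12,\frac12\right)\right) }. \]
   Context: $q:=e^{2\pi i\tau}$, $\tau\in\mathbb H$. $Q(\mathbf n):=n_1^2+n_2^2-n_1n_2$. With $p=2$, \begin{align*} F(\zeta_1,\zeta_2;q)&:=\sum_{n_1,n_2\in\mathbb Z}\frac{q^{2Q\left(n_1-\frac12,\,n_2-\frac12\right)}}{\left(1-\zeta_1^{-1}\right)\left(1-\zeta_2^{-1}\right)\left(1-\zeta_1^{-1}\zeta_2^{-1}\right)}\Big(\zeta_1^{n_1-1} \zeta_2^{n_2-1} -\zeta_1^{-n_1+n_2-1}\zeta_2^{n_2-1}\\ &\qquad-\zeta_1^{n_1-1}\zeta_2^{-n_2+n_1-1}+\zeta_1^{-n_2-1} \zeta_2^{-n_2+n_1-1}+\zeta_1^{-n_1+n_2-1} \zeta_2^{-n_1-1}-\zeta_1^{-n_2-1}\zeta_2^{-n_1-1}\Big), \end{align*} where each summand is a Laurent polynomial in $\zeta_1,\zeta_2$, and $F_0(q):=\lim_{(\zeta_1,\zeta_2)\to(1,1)}F(\zeta_1,\zeta_2;q)$. *)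

From Stdlib Require Import Reals ZArith.
From Coquelicot Require Import Coquelicot.
Open Scope R_scope.
Open Scope C_scope.

Definition Czpow (z : C) (k : Z) : C :=
  match k with
  | Z0 => 1
  | Zpos p => pow_n z (Pos.to_nat p)
  | Zneg p => / pow_n z (Pos.to_nat p)
  end.

(* q^x := exp(2 pi i tau x) for real x, with q = e^{2 pi i tau};
   written out as exp(Re w) (cos(Im w) + i sin(Im w)), w = 2 pi i tau x. *)
Definition qpow (tau : C) (x : R) : C :=
  let re := (- (2 * PI * Im tau * x))%R in
  let im := (2 * PI * Re tau * x)%R in
  (exp re * cos im, exp re * sin im)%R.

Definition Qf (a b : R) : R := (a ^ 2 + b ^ 2 - a * b)%R.

Definition psum2 (f : Z -> Z -> C) (N : nat) : C :=
  sum_n (fun i => sum_n (fun j =>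
     f (Z.of_nat i - Z.of_nat N)%Z (Z.of_nat j - Z.of_nat N)%Z) (2 * N)) (2 * N).

Definition is_zsum2 (f : Z -> Z -> C) (l : C) : Prop :=
  filterlim (psum2 f) eventually (locally l).

Definition zsum2 (f : Z -> Z -> C) : C :=
  (real (Lim_seq (fun N => Re (psum2 f N))), real (Lim_seq (fun N => Im (psum2 f N))))%R.

Definition F_term (tau z1 z2 : C) (n1 n2 : Z) : C :=
  qpow tau (2 * Qf (IZR n1 - /2) (IZR n2 - /2))%R *
  ((Czpow z1 (n1 - 1)%Z * Czpow z2 (n2 - 1)%Z
    - Czpow z1 (- n1 + n2 - 1)%Z * Czpow z2 (n2 - 1)%Z
    - Czpow z1 (n1 - 1)%Z * Czpow z2 (- n2 + n1 - 1)%Z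
    + Czpow z1 (- n2 - 1)%Z * Czpow z2 (- n2 + n1 - 1)%Z
    + Czpow z1 (- n1 + n2 - 1)%Z * Czpow z2 (- n1 - 1)%Z
    - Czpow z1 (- n2 - 1)%Z * Czpow z2 (- n1 - 1)%Z)
   / ((1 - / z1) * (1 - / z2) * (1 - / z1 * / z2))).

Definition F (tau z1 z2 : C) : C := zsum2 (F_term tau z1 z2).

Definition F_dom (z : C * C) : Prop :=
  fst z <> 0 /\ snd z <> 0 /\ fst z <> 1 /\ snd z <> 1 /\ fst z * snd z <> 1.

Definition RHS_term (tau : C) (n1 n2 : Z) : C :=
  RtoC (12 * IZR n1 * IZR n2 - 3 * IZR n1 ^ 2 - 3 * IZR n2 ^ 2 - IZR n1 - IZR n2)%R *
  qpow tau (2 * Qf (IZR n1 - /2) (IZR n2 - /2))%R.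

From Stdlib Require Import Reals ZArith Lra Lia List.
From Coquelicot Require Import Coquelicot.
Open Scope R_scope.
Open Scope C_scope.

(* Write x, y for zeta1, zeta2. The numerator of each summand of F is antisymmetric under the
   Weyl group of A2, generated by s1 : x^a y^b |-> x^(b-a-1) y^b and s2 : x^a y^b |-> x^a y^(a-b-1),
   and the denominator is the corresponding Weyl denominator. So the quotient is the Laurent
   polynomial obtained from x^(n1-1) y^(n2-1) by the divided differences d1 d2 d1, where
   (1 - /x) (d1 p)(x, y) = p(x, y) - /x p(/x, x y) and symmetrically for d2. Its value at (1, 1)
   is L(n) = -(n1 - 2 n2)(2 n1 - n2)(n1 + n2)/2 ([weyl_value]), and near (1, 1) it differs from L(n) by at most
   the distance to (1, 1) times a bound exponential in |n1| + |n2|, which the Gaussian factor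
   q^(2 Q(n - (1/2,1/2))) absorbs; hence F tends to the sum of L(n) q^(2 Q(n - (1/2,1/2))).
   Finally, with P the polynomial of the statement ([rhs_poly]), L - P/4 is odd under n |-> (1, 1) - n while Q(n - (1/2,1/2)) is even, so the partial
   sums of (L - P/4) q^(2 Q(n - (1/2,1/2))) over the squares [-N, N+1]^2 vanish; they differ from
   those over [-N, N]^2 by boundary terms that tend to 0. *)

(** * Integer powers of complex numbers *)

Lemma Cinv_neq_0 (z : C) : z <> 0 -> / z <> 0.
Proof.
  intros Hz H. apply (f_equal (Cmult z)) in H.
  rewrite Cinv_r, Cmult_0_r in H by exact Hz.
  apply (f_equal fst) in H. simpl in H. lra.
Qed.

Lemma Cminus_neq_0 (a b : C) : a <> b -> a - b <> 0.
Proof. intros Hab H. apply Hab. rewrite <- (Cplus_0_l b), <- H. ring. Qed.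

Lemma Cinv_neq_1 (u : C) : u <> 0 -> u <> 1 -> / u <> 1.
Proof.
  intros H0 H1 H. apply H1. transitivity (/ / u); [field; exact H0|]. rewrite H.
  apply injective_projections; simpl; field.
Qed.

Lemma one_sub_inv_neq_0 (u : C) : u <> 0 -> u <> 1 -> 1 - / u <> 0.
Proof.
  intros H0 H1 H. apply (Cminus_neq_0 u 1 H1).
  transitivity (u * (1 - / u)); [field; exact H0 | rewrite H; ring].
Qed.

Lemma pow_n_Cpow (z : C) (n : nat) : pow_n z n = z ^ n.
Proof. induction n as [|n IH]; simpl; [reflexivity | now rewrite IH]. Qed.

Lemma Czpow_of_nat (z : C) (n : nat) : Czpow z (Z.of_nat n) = z ^ n.
Proof.
  destruct n as [|n]; [reflexivity|].
  simpl. now rewrite pow_n_Cpow, SuccNat2Pos.id_succ.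
Qed.

Lemma Czpow_opp_of_nat (z : C) (n : nat) : Czpow z (- Z.of_nat n) = / z ^ n.
Proof.
  destruct n as [|n]; simpl.
  - apply injective_projections; simpl; field.
  - now rewrite pow_n_Cpow, SuccNat2Pos.id_succ.
Qed.

Lemma Z_of_nat_or_opp (k : Z) : exists n, k = Z.of_nat n \/ k = (- Z.of_nat n)%Z.
Proof. exists (Z.abs_nat k). lia. Qed.

Section Czpow_laws.

Variable z : C.
Hypothesis Hz : z <> 0.

Lemma Czpow_nz (k : Z) : Czpow z k <> 0.
Proof.
  destruct (Z_of_nat_or_opp k) as [n [-> | ->]].
  - rewrite Czpow_of_nat. now apply Cpow_nz.
  - rewrite Czpow_opp_of_nat. now apply Cinv_neq_0, Cpow_nz.
Qed.

Lemma Czpow_succ (k : Z) : Czpow z (k + 1) = Czpow z k * z.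
Proof.
  destruct (Z_le_gt_dec 0 k).
  - replace (k + 1)%Z with (Z.of_nat (S (Z.to_nat k))) by lia.
    replace k with (Z.of_nat (Z.to_nat k)) at 2 by lia.
    rewrite !Czpow_of_nat, Cpow_S. ring.
  - replace (k + 1)%Z with (- Z.of_nat (Z.to_nat (- k - 1)))%Z by lia.
    replace k with (- Z.of_nat (S (Z.to_nat (- k - 1))))%Z at 2 by lia.
    rewrite !Czpow_opp_of_nat, Cpow_S. field. split; [now apply Cpow_nz | exact Hz].
Qed.

Lemma Czpow_add_r (a b : Z) : Czpow z (a + b) = Czpow z a * Czpow z b.
Proof.
  induction b as [|b IH|b IH] using Z.peano_ind.
  - rewrite Z.add_0_r. simpl. ring.
  - rewrite <- Z.add_1_r, Z.add_assoc, !Czpow_succ, IH. ring.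
  - transitivity (Czpow z (a + Z.pred b) * z / z); [field; exact Hz|].
    rewrite <- Czpow_succ. replace (a + Z.pred b + 1)%Z with (a + b)%Z by lia.
    rewrite IH. replace b with (Z.pred b + 1)%Z at 1 by lia.
    rewrite Czpow_succ. field. exact Hz.
Qed.

Lemma Czpow_opp_r (a : Z) : Czpow z (- a) = / Czpow z a.
Proof.
  pose proof (Czpow_nz a).
  transitivity (Czpow z (- a) * Czpow z a / Czpow z a); [field; exact H|].
  rewrite <- Czpow_add_r, Z.add_opp_diag_l. simpl. field. exact H.
Qed.

Lemma Czpow_sub_r (a b : Z) : Czpow z (a - b) = Czpow z a / Czpow z b.
Proof. unfold Z.sub. now rewrite Czpow_add_r, Czpow_opp_r. Qed.

Lemma Czpow_inv (k : Z) : Czpow (/ z) k = / Czpow z k.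
Proof.
  destruct (Z_of_nat_or_opp k) as [n [-> | ->]].
  - now rewrite !Czpow_of_nat, Cpow_inv.
  - rewrite !Czpow_opp_of_nat, Cpow_inv by exact Hz. field. now apply Cpow_nz.
Qed.

End Czpow_laws.

Lemma Czpow_mult_l (x y : C) (k : Z) : x <> 0 -> y <> 0 -> Czpow (x * y) k = Czpow x k * Czpow y k.
Proof.
  intros Hx Hy. destruct (Z_of_nat_or_opp k) as [n [-> | ->]].
  - now rewrite !Czpow_of_nat, Cpow_mult_l.
  - rewrite !Czpow_opp_of_nat, Cpow_mult_l. field. split; now apply Cpow_nz.
Qed.

Lemma Czpow_1_l (k : Z) : Czpow 1 k = 1.
Proof.
  destruct (Z_of_nat_or_opp k) as [n [-> | ->]].
  - now rewrite Czpow_of_nat, Cpow_1_l.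
  - rewrite Czpow_opp_of_nat, Cpow_1_l. apply injective_projections; simpl; field.
Qed.

Lemma Czpow_1_r (z : C) : Czpow z 1 = z.
Proof. change 1%Z with (Z.of_nat 1). now rewrite Czpow_of_nat, Cpow_1_r. Qed.

(** * Laurent polynomials and divided differences *)

Definition lsum {A : Type} (f : A -> C) (l : list A) : C :=
  fold_right (fun a acc => f a + acc) 0 l.

Lemma lsum_app {A} (f : A -> C) l1 l2 : lsum f (l1 ++ l2) = lsum f l1 + lsum f l2.
Proof. induction l1 as [|a l1 IH]; simpl; [ring | rewrite IH; ring]. Qed.

Lemma lsum_map {A B} (f : B -> C) (h : A -> B) l : lsum f (map h l) = lsum (fun a => f (h a)) l.
Proof. induction l as [|a l IH]; simpl; congruence. Qed.

Lemma lsum_ext {A} (f g : A -> C) l : (forall a, f a = g a) -> lsum f l = lsum g l.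
Proof. intros H. induction l as [|a l IH]; simpl; congruence. Qed.

Lemma lsum_mult_l {A} (k : C) (f : A -> C) l : lsum (fun a => k * f a) l = k * lsum f l.
Proof. induction l as [|a l IH]; simpl; [ring | rewrite IH; ring]. Qed.

Fixpoint zup (lo : Z) (d : nat) : list Z :=
  match d with O => nil | S d' => (lo + 1)%Z :: zup (lo + 1) d' end.

(* Signed summation range: [lo < j <= hi] with sign [+1], or [hi < j <= lo] with
   sign [-1], so that signed sums telescope whatever the order of [lo] and [hi]. *)
Definition srange (lo hi : Z) : list (R * Z) :=
  if Z.leb lo hi then map (fun j => (1%R, j)) (zup lo (Z.to_nat (hi - lo)))
  else map (fun j => ((-1)%R, j)) (zup hi (Z.to_nat (lo - hi))).

Lemma lsum_zup_telescope (G : Z -> C) lo d :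
  lsum (fun j => G j - G (j - 1)%Z) (zup lo d) = G (lo + Z.of_nat d)%Z - G lo.
Proof.
  revert lo; induction d as [|d IH]; intros lo; simpl.
  - rewrite Z.add_0_r. ring.
  - rewrite IH, Z.add_simpl_r.
    replace (lo + 1 + Z.of_nat d)%Z with (lo + Z.pos (Pos.of_succ_nat d))%Z by lia. ring.
Qed.

Lemma lsum_srange_telescope (G : Z -> C) lo hi :
  lsum (fun sj => RtoC (fst sj) * (G (snd sj) - G (snd sj - 1)%Z)) (srange lo hi) = G hi - G lo.
Proof.
  unfold srange. destruct (Z.leb_spec lo hi); rewrite lsum_map; cbn [fst snd].
  - rewrite (lsum_ext _ (fun j => G j - G (j - 1)%Z)) by (intros; ring).
    rewrite lsum_zup_telescope.
    now replace (lo + Z.of_nat (Z.to_nat (hi - lo)))%Z with hi by lia.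
  - rewrite lsum_mult_l, lsum_zup_telescope.
    replace (hi + Z.of_nat (Z.to_nat (lo - hi)))%Z with lo by lia. ring.
Qed.

Lemma in_zup lo d j : In j (zup lo d) -> (lo < j <= lo + Z.of_nat d)%Z.
Proof.
  revert lo; induction d as [|d IH]; intros lo H; simpl in H; [contradiction|].
  destruct H as [<- | H]; [lia|]. apply IH in H. lia.
Qed.

Lemma length_zup lo d : length (zup lo d) = d.
Proof. revert lo; induction d; intros; simpl; auto. Qed.

Lemma in_srange lo hi sj : In sj (srange lo hi) ->
  Rabs (fst sj) <= 1 /\ (Z.min lo hi < snd sj <= Z.max lo hi)%Z.
Proof.
  unfold srange. destruct (Z.leb_spec lo hi); intros Hin; apply in_map_iff in Hin;
    destruct Hin as [j [<- Hj]]; apply in_zup in Hj; simpl; split; try lia.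
  - rewrite Rabs_R1. lra.
  - rewrite Rabs_left; lra.
Qed.

Lemma length_srange lo hi : length (srange lo hi) = Z.to_nat (Z.abs (hi - lo)).
Proof. unfold srange. destruct (Z.leb_spec lo hi); rewrite length_map, length_zup; lia. Qed.

Record monomial := Mono { coef : R; xexp : Z; yexp : Z }.

Definition leval (p : list monomial) (x y : C) : C :=
  lsum (fun m => RtoC (coef m) * Czpow x (xexp m) * Czpow y (yexp m)) p.

Definition lpair (phi : Z -> Z -> R) (p : list monomial) : C :=
  lsum (fun m => RtoC (coef m * phi (xexp m) (yexp m))) p.

Definition lswap (p : list monomial) : list monomial :=
  map (fun m => Mono (coef m) (yexp m) (xexp m)) p.

Definition ddiff1 (p : list monomial) : list monomial :=
  flat_map (fun m => map (fun sj => Mono (coef m * fst sj) (snd sj) (yexp m))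
                         (srange (yexp m - xexp m - 1) (xexp m))) p.

Definition ddiff2 (p : list monomial) : list monomial := lswap (ddiff1 (lswap p)).

Lemma leval_lswap p x y : leval (lswap p) x y = leval p y x.
Proof. unfold leval, lswap. rewrite lsum_map. apply lsum_ext. intros m. simpl. ring. Qed.

Lemma lpair_lswap phi p : lpair phi (lswap p) = lpair (fun a b => phi b a) p.
Proof. unfold lpair, lswap. now rewrite lsum_map. Qed.

Lemma leval_nil x y : leval nil x y = 0.
Proof. reflexivity. Qed.

Lemma leval_cons m p x y :
  leval (m :: p) x y = RtoC (coef m) * Czpow x (xexp m) * Czpow y (yexp m) + leval p x y.
Proof. reflexivity. Qed.

Lemma leval_app p q x y : leval (p ++ q) x y = leval p x y + leval q x y.
Proof. apply lsum_app. Qed.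

Lemma ddiff1_cons m p : ddiff1 (m :: p) = ddiff1 (m :: nil) ++ ddiff1 p.
Proof. unfold ddiff1. simpl. now rewrite app_nil_r. Qed.

Lemma leval_ddiff1_monomial c a b (x y : C) : x <> 0 -> y <> 0 ->
  (1 - / x) * leval (ddiff1 (Mono c a b :: nil)) x y
  = RtoC c * Czpow x a * Czpow y b - / x * (RtoC c * Czpow (/ x) a * Czpow (x * y) b).
Proof.
  intros Hx Hy. unfold ddiff1, leval. simpl flat_map. rewrite app_nil_r, lsum_map.
  cbn [coef xexp yexp].
  rewrite (lsum_ext _ (fun sj => (RtoC c * Czpow y b) * (RtoC (fst sj) * Czpow x (snd sj))))
    by (intros; rewrite RtoC_mult; ring).
  rewrite lsum_mult_l, Cmult_assoc, (Cmult_comm (1 - / x)), <- Cmult_assoc, <- lsum_mult_l.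
  rewrite (lsum_ext _ (fun sj => RtoC (fst sj) * (Czpow x (snd sj) - Czpow x (snd sj - 1)%Z))).
  2:{ intros sj. rewrite Czpow_sub_r, Czpow_1_r by exact Hx. field. exact Hx. }
  rewrite lsum_srange_telescope, Czpow_inv, Czpow_mult_l, !Czpow_sub_r by auto.
  rewrite Czpow_1_r. field. repeat split; auto; now apply Czpow_nz.
Qed.

Lemma leval_ddiff1 p (x y : C) : x <> 0 -> y <> 0 ->
  (1 - / x) * leval (ddiff1 p) x y = leval p x y - / x * leval p (/ x) (x * y).
Proof.
  intros Hx Hy. induction p as [|[c a b] p IH]; [simpl; ring|].
  rewrite ddiff1_cons, leval_app, Cmult_plus_distr_l, IH, leval_ddiff1_monomial by auto.
  rewrite !leval_cons. simpl. ring.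
Qed.

Lemma leval_ddiff2 p (x y : C) : x <> 0 -> y <> 0 ->
  (1 - / y) * leval (ddiff2 p) x y = leval p x y - / y * leval p (x * y) (/ y).
Proof.
  intros Hx Hy. unfold ddiff2.
  rewrite leval_lswap, leval_ddiff1, !leval_lswap, (Cmult_comm y) by auto. reflexivity.
Qed.

Lemma lpair_ddiff1 (phi Phi : Z -> Z -> R) p :
  (forall j b, phi j b = Phi j b - Phi (j - 1)%Z b)%R ->
  lpair phi (ddiff1 p) = lpair (fun a b => Phi a b - Phi (b - a - 1)%Z b)%R p.
Proof.
  intros Hphi. induction p as [|[c a b] p IH]; [reflexivity|].
  rewrite ddiff1_cons. unfold lpair in *. rewrite lsum_app, IH. simpl. f_equal.
  rewrite app_nil_r, lsum_map. cbn [coef xexp yexp].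
  rewrite (lsum_ext _ (fun sj => RtoC c * (RtoC (fst sj) * (RtoC (Phi (snd sj) b) - RtoC (Phi (snd sj - 1)%Z b))))).
  2:{ intros sj. rewrite Hphi, <- RtoC_minus, <- !RtoC_mult. f_equal. ring. }
  rewrite lsum_mult_l, (lsum_srange_telescope (fun j => RtoC (Phi j b))).
  now rewrite RtoC_mult, RtoC_minus.
Qed.

Lemma lpair_ddiff2 (phi Phi : Z -> Z -> R) p :
  (forall a j, phi a j = Phi a j - Phi a (j - 1)%Z)%R ->
  lpair phi (ddiff2 p) = lpair (fun a b => Phi a b - Phi a (a - b - 1)%Z)%R p.
Proof.
  intros Hphi. unfold ddiff2.
  rewrite lpair_lswap, (lpair_ddiff1 _ (fun j b => Phi b j)), lpair_lswap by auto.
  reflexivity.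
Qed.

Lemma leval_1_1 p : leval p 1 1 = lpair (fun _ _ => 1%R) p.
Proof.
  unfold leval, lpair. apply lsum_ext. intros m.
  rewrite !Czpow_1_l, Rmult_1_r. ring.
Qed.

Definition lbounded (B : nat) (p : list monomial) : Prop :=
  List.Forall (fun m => (Rabs (coef m) <= 1)%R /\ (Z.abs (xexp m) <= Z.of_nat B)%Z
                   /\ (Z.abs (yexp m) <= Z.of_nat B)%Z) p.

Lemma lbounded_lswap B p : lbounded B p -> lbounded B (lswap p).
Proof.
  intros H. apply List.Forall_map. eapply List.Forall_impl; [|exact H]. simpl. tauto.
Qed.

Lemma lbounded_ddiff1 B p : lbounded B p -> lbounded (2 * B + 1) (ddiff1 p).
Proof.
  intros H. apply List.Forall_forall. intros m' Hm'.
  apply in_flat_map in Hm'. destruct Hm' as [m [Hm Hin]].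
  apply in_map_iff in Hin. destruct Hin as [sj [<- Hsj]].
  apply in_srange in Hsj as [Hs Hj].
  unfold lbounded in H. rewrite List.Forall_forall in H. destruct (H m Hm) as [Hc [Ha Hb]]. simpl.
  repeat split; try lia.
  rewrite Rabs_mult. pose proof (Rabs_pos (coef m)). pose proof (Rabs_pos (fst sj)). nra.
Qed.

Lemma length_ddiff1 B p : lbounded B p -> (length (ddiff1 p) <= length p * 2 ^ (3 * B + 1))%nat.
Proof.
  induction p as [|m p IH]; intros H; [simpl; lia|].
  inversion H as [|? ? [_ [Ha Hb]] Hp]; subst.
  rewrite ddiff1_cons, length_app. unfold ddiff1 at 1. simpl flat_map.
  rewrite app_nil_r, length_map, length_srange.
  pose proof (Nat.pow_gt_lin_r 2 (3 * B + 1) ltac:(lia)). specialize (IH Hp). simpl length. nia.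
Qed.

Lemma lbounded_ddiff2 B p : lbounded B p -> lbounded (2 * B + 1) (ddiff2 p).
Proof. intros H. now apply lbounded_lswap, lbounded_ddiff1, lbounded_lswap. Qed.

Lemma length_ddiff2 B p : lbounded B p -> (length (ddiff2 p) <= length p * 2 ^ (3 * B + 1))%nat.
Proof.
  intros H. unfold ddiff2, lswap at 1. rewrite length_map.
  rewrite <- (length_map (fun m => Mono (coef m) (yexp m) (xexp m)) p).
  now apply length_ddiff1, lbounded_lswap.
Qed.

Lemma INR_succ_le_pow2 (n : nat) : (INR n + 1 <= 2 ^ n)%R.
Proof.
  induction n as [|n IH]; [simpl; lra|].
  rewrite S_INR. pose proof (pow_R1_Rle 2 n ltac:(lra)). simpl. lra.
Qed.

Lemma Cmod_Cpow_sub_1_le (w : C) (r e : R) (n : nat) :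
  (1 <= r)%R -> (Cmod w <= r)%R -> (Cmod (w - 1) <= e)%R ->
  (Cmod (w ^ n - 1) <= INR n * e * r ^ n)%R.
Proof.
  intros Hr Hw He. pose proof (Cmod_ge_0 (w - 1)).
  induction n as [|n IH].
  - simpl. replace (1 - 1) with (RtoC 0) by ring. rewrite Cmod_0. lra.
  - replace (w ^ S n - 1) with (w * (w ^ n - 1) + (w - 1)) by (simpl; ring).
    eapply Rle_trans; [apply Cmod_triangle|]. rewrite Cmod_mult, S_INR.
    pose proof (pow_R1_Rle r n Hr). pose proof (pos_INR n).
    assert (Cmod w * Cmod (w ^ n - 1) <= r * (INR n * e * r ^ n))%R
      by (apply Rmult_le_compat; auto using Cmod_ge_0).
    assert (1 <= r * r ^ n)%R by nra.
    assert (e <= e * (r * r ^ n))%R by nra.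
    simpl. nra.
Qed.

Lemma Cmod_Czpow_near_1 (x : C) (d : R) (k : Z) : (Cmod (x - 1) <= d)%R -> (d <= / 2)%R ->
  (Cmod (Czpow x k) <= 2 ^ Z.abs_nat k)%R /\ (Cmod (Czpow x k - 1) <= 2 * d * 4 ^ Z.abs_nat k)%R.
Proof.
  intros Hd Hd2. pose proof (Cmod_ge_0 (x - 1)).
  assert (Hx_le : (Cmod x <= 2)%R).
  { replace x with ((x - 1) + 1) by ring. eapply Rle_trans; [apply Cmod_triangle|].
    rewrite Cmod_1. lra. }
  assert (Hx_ge : (/ 2 <= Cmod x)%R).
  { pose proof (Cmod_triangle (1 - x) x) as H1. replace (1 - x + x) with (RtoC 1) in H1 by ring.
    rewrite Cmod_1 in H1. replace (1 - x) with (- (x - 1)) in H1 by ring.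
    rewrite Cmod_opp in H1. lra. }
  assert (Hx0 : x <> 0) by (intros ->; rewrite Cmod_0 in Hx_ge; lra).
  assert (Hpow : forall n, (INR n * (2 * d) * 2 ^ n <= 2 * d * 4 ^ n)%R).
  { intros n. replace (4 ^ n)%R with (2 ^ n * 2 ^ n)%R
      by (rewrite <- Rpow_mult_distr; f_equal; lra).
    assert (INR n * 2 ^ n <= 2 ^ n * 2 ^ n)%R
      by (apply Rmult_le_compat_r; [apply pow_le; lra | pose proof (INR_succ_le_pow2 n); lra]).
    nra. }
  destruct (Z_of_nat_or_opp k) as [n [-> | ->]].
  - rewrite Zabs2Nat.id, Czpow_of_nat, Cmod_pow. split.
    + apply pow_incr. split; [apply Cmod_ge_0 | lra].
    + eapply Rle_trans; [apply (Cmod_Cpow_sub_1_le x 2 (2 * d)); lra|]. apply Hpow.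
  - replace (Z.abs_nat (- Z.of_nat n)) with n by lia.
    rewrite Czpow_opp_of_nat, <- Cpow_inv by exact Hx0.
    assert (Hinv : (Cmod (/ x) <= 2)%R).
    { rewrite Cmod_inv by exact Hx0. rewrite <- (Rinv_inv 2). apply Rinv_le_contravar; lra. }
    split.
    + rewrite Cmod_pow. apply pow_incr. split; [apply Cmod_ge_0 | lra].
    + eapply Rle_trans; [apply (Cmod_Cpow_sub_1_le (/ x) 2 (2 * d)); try lra|]; [|apply Hpow].
      replace (/ x - 1) with (- (x - 1) * / x) by (field; exact Hx0).
      rewrite Cmod_mult, Cmod_opp. pose proof (Cmod_ge_0 (/ x)). nra.
Qed.

Lemma Cmod_monomial_sub_1_le (x y : C) (d : R) (a b : Z) (B : nat) :
  (Cmod (x - 1) <= d)%R -> (Cmod (y - 1) <= d)%R -> (d <= / 2)%R ->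
  (Z.abs a <= Z.of_nat B)%Z -> (Z.abs b <= Z.of_nat B)%Z ->
  (Cmod (Czpow x a * Czpow y b - 1) <= d * 2 ^ (3 * B + 2))%R.
Proof.
  intros Hx Hy Hd Ha Hb. pose proof (Cmod_ge_0 (x - 1)).
  destruct (Cmod_Czpow_near_1 x d a Hx Hd) as [Xa Xa1].
  destruct (Cmod_Czpow_near_1 y d b Hy Hd) as [_ Yb1].
  assert (P2 : (2 ^ Z.abs_nat a <= 2 ^ B)%R) by (apply Rle_pow; [lra | lia]).
  assert (P4a : (4 ^ Z.abs_nat a <= 4 ^ B)%R) by (apply Rle_pow; [lra | lia]).
  assert (P4b : (4 ^ Z.abs_nat b <= 4 ^ B)%R) by (apply Rle_pow; [lra | lia]).
  assert (E : (2 ^ (3 * B + 2) = 4 * 2 ^ B * 4 ^ B)%R).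
  { replace (3 * B + 2)%nat with (2 + B + 2 * B)%nat by lia.
    rewrite !pow_add, pow_mult. replace (2 ^ 2)%R with 4%R by ring. ring. }
  pose proof (pow_R1_Rle 2 B ltac:(lra)). pose proof (pow_R1_Rle 4 B ltac:(lra)).
  replace (Czpow x a * Czpow y b - 1) with (Czpow x a * (Czpow y b - 1) + (Czpow x a - 1)) by ring.
  eapply Rle_trans; [apply Cmod_triangle|]. rewrite Cmod_mult, E.
  assert (Cmod (Czpow x a) * Cmod (Czpow y b - 1) <= 2 ^ B * (2 * d * 4 ^ B))%R
    by (apply Rmult_le_compat; try apply Cmod_ge_0; nra).
  assert (2 * d * 4 ^ Z.abs_nat a <= 2 * d * 4 ^ B)%R by nra.
  assert (0 <= 2 * d * 4 ^ B)%R by nra.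
  assert (2 * d * 4 ^ B <= 2 * d * 4 ^ B * 2 ^ B)%R by nra.
  nra.
Qed.

Lemma Cmod_leval_sub_le (p : list monomial) (B : nat) (x y : C) (d : R) : lbounded B p ->
  (Cmod (x - 1) <= d)%R -> (Cmod (y - 1) <= d)%R -> (d <= / 2)%R ->
  (Cmod (leval p x y - leval p 1 1) <= INR (length p) * (d * 2 ^ (3 * B + 2)))%R.
Proof.
  intros Hp Hx Hy Hd. induction Hp as [|m p [Hc [Ha Hb]] Hp IH].
  - rewrite !leval_nil. replace (0 - 0) with (RtoC 0) by ring. rewrite Cmod_0. simpl. lra.
  - rewrite !leval_cons, !Czpow_1_l.
    replace (RtoC (coef m) * Czpow x (xexp m) * Czpow y (yexp m) + leval p x y
             - (RtoC (coef m) * 1 * 1 + leval p 1 1))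
      with (RtoC (coef m) * (Czpow x (xexp m) * Czpow y (yexp m) - 1) + (leval p x y - leval p 1 1))
      by ring.
    eapply Rle_trans; [apply Cmod_triangle|]. rewrite Cmod_mult, Cmod_R.
    pose proof (Cmod_monomial_sub_1_le x y d _ _ B Hx Hy Hd Ha Hb).
    assert (Rabs (coef m) * Cmod (Czpow x (xexp m) * Czpow y (yexp m) - 1)
            <= 1 * (d * 2 ^ (3 * B + 2)))%R
      by (apply Rmult_le_compat; auto using Rabs_pos, Cmod_ge_0).
    simpl length. rewrite S_INR. lra.
Qed.

Lemma Cmod_leval_1_1_le (p : list monomial) (B : nat) : lbounded B p ->
  (Cmod (leval p 1 1) <= INR (length p))%R.
Proof.
  intros Hp. induction Hp as [|m p [Hc _] Hp IH].
  - rewrite leval_nil, Cmod_0. simpl. lra.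
  - rewrite leval_cons, !Czpow_1_l. eapply Rle_trans; [apply Cmod_triangle|].
    rewrite !Cmult_1_r, Cmod_R. simpl length. rewrite S_INR. lra.
Qed.

Lemma leval_ddiff1_solve p (x y : C) : x <> 0 -> y <> 0 -> x <> 1 ->
  leval (ddiff1 p) x y = (leval p x y - / x * leval p (/ x) (x * y)) / (1 - / x).
Proof.
  intros Hx Hy Hx1. rewrite <- leval_ddiff1 by auto. field. auto using Cminus_neq_0.
Qed.

Lemma leval_ddiff2_solve p (x y : C) : x <> 0 -> y <> 0 -> y <> 1 ->
  leval (ddiff2 p) x y = (leval p x y - / y * leval p (x * y) (/ y)) / (1 - / y).
Proof.
  intros Hx Hy Hy1. rewrite <- leval_ddiff2 by auto. field. auto using Cminus_neq_0.
Qed.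

(** * The Weyl quotient *)

Definition weyl_num (x y : C) (n1 n2 : Z) : C :=
  Czpow x (n1 - 1)%Z * Czpow y (n2 - 1)%Z
  - Czpow x (- n1 + n2 - 1)%Z * Czpow y (n2 - 1)%Z
  - Czpow x (n1 - 1)%Z * Czpow y (- n2 + n1 - 1)%Z
  + Czpow x (- n2 - 1)%Z * Czpow y (- n2 + n1 - 1)%Z
  + Czpow x (- n1 + n2 - 1)%Z * Czpow y (- n1 - 1)%Z
  - Czpow x (- n2 - 1)%Z * Czpow y (- n1 - 1)%Z.

Definition weyl_den (x y : C) : C := (1 - / x) * (1 - / y) * (1 - / x * / y).

Definition weyl_quot (n1 n2 : Z) : list monomial :=
  ddiff1 (ddiff2 (ddiff1 (Mono 1 (n1 - 1) (n2 - 1) :: nil))).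

Lemma weyl_den_mul_quot (x y : C) (n1 n2 : Z) :
  x <> 0 -> y <> 0 -> x <> 1 -> y <> 1 -> x * y <> 1 ->
  weyl_den x y * leval (weyl_quot n1 n2) x y = weyl_num x y n1 n2.
Proof.
  intros Hx Hy Hx1 Hy1 Hxy1.
  assert (Hxy : x * y <> 0) by now apply Cmult_neq_0.
  assert (Hix : / x <> 0) by now apply Cinv_neq_0.
  assert (Hiy : / y <> 0) by now apply Cinv_neq_0.
  assert (Hixy : / (x * y) <> 0) by now apply Cinv_neq_0.
  assert (Hix1 : / x <> 1) by now apply Cinv_neq_1.
  unfold weyl_quot. set (m := Mono 1 (n1 - 1) (n2 - 1) :: nil).
  rewrite (leval_ddiff1_solve _ x y), (leval_ddiff2_solve _ x y),
    (leval_ddiff2_solve _ (/ x) (x * y)) by auto.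
  replace (/ x * (x * y)) with y by (field; auto).
  rewrite (leval_ddiff1_solve _ x y), (leval_ddiff1_solve _ (x * y) (/ y)),
    (leval_ddiff1_solve _ (/ x) (x * y)), (leval_ddiff1_solve _ y (/ (x * y))) by auto.
  replace (x * y * / y) with x by (field; auto).
  replace (/ / x) with x by (field; auto).
  replace (/ x * (x * y)) with y by (field; auto).
  replace (y * / (x * y)) with (/ x) by (field; auto).
  unfold m, leval, lsum, weyl_den, weyl_num. cbn [fold_right coef xexp yexp].
  rewrite !Czpow_inv, !Czpow_mult_l, !Czpow_sub_r, !Czpow_add_r, !Czpow_opp_r, !Czpow_1_r by auto.
  field. repeat split; auto using Cminus_neq_0, not_eq_sym, Czpow_nz.
Qed.

Definition weyl_value (n1 n2 : Z) : R :=
  (- (IZR n1 - 2 * IZR n2) * (2 * IZR n1 - IZR n2) * (IZR n1 + IZR n2) / 2)%R.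

Lemma leval_weyl_quot_1_1 (n1 n2 : Z) : leval (weyl_quot n1 n2) 1 1 = RtoC (weyl_value n1 n2).
Proof.
  rewrite leval_1_1. unfold weyl_quot.
  (* Each potential is a discrete antiderivative of the weight left by the previous step. *)
  rewrite (lpair_ddiff1 _ (fun j _ => IZR j)) by (intros; rewrite minus_IZR; ring).
  rewrite (lpair_ddiff2 _ (fun a j => (2 * IZR a + 1) * IZR j - IZR j * (IZR j + 1) / 2)%R)
    by (intros; rewrite !minus_IZR; field).
  rewrite (lpair_ddiff1 _ (fun j b => - IZR j * (IZR j + 1) * (2 * IZR j + 1) / 4
                                     + (3 * IZR b + / 2) * (IZR j * (IZR j + 1)) / 2
                                     + (2 * IZR b + 1) * IZR j)%R)
    by (intros; rewrite !minus_IZR; field).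
  unfold lpair, lsum. cbn [fold_right coef xexp yexp]. rewrite Cplus_0_r. f_equal.
  unfold weyl_value. rewrite !minus_IZR. field.
Qed.

Definition abs_sum (n1 n2 : Z) : nat := (Z.abs_nat n1 + Z.abs_nat n2)%nat.

Lemma lbounded_weyl_seed (n1 n2 : Z) :
  lbounded (abs_sum n1 n2 + 1) (Mono 1 (n1 - 1) (n2 - 1) :: nil).
Proof.
  unfold abs_sum. constructor; [|constructor]. cbn [coef xexp yexp].
  rewrite Rabs_R1. repeat split; [lra | lia | lia].
Qed.

Lemma lbounded_weyl_quot (n1 n2 : Z) : lbounded (8 * abs_sum n1 n2 + 15) (weyl_quot n1 n2).
Proof.
  replace (8 * abs_sum n1 n2 + 15)%nat with (2 * (2 * (2 * (abs_sum n1 n2 + 1) + 1) + 1) + 1)%nat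
    by lia.
  apply lbounded_ddiff1, lbounded_ddiff2, lbounded_ddiff1, lbounded_weyl_seed.
Qed.

Lemma length_weyl_quot (n1 n2 : Z) : (length (weyl_quot n1 n2) <= 2 ^ (21 * abs_sum n1 n2 + 36))%nat.
Proof.
  set (s := abs_sum n1 n2). pose proof (lbounded_weyl_seed n1 n2) as H0. fold s in H0.
  pose proof (lbounded_ddiff1 _ _ H0) as H1. pose proof (lbounded_ddiff2 _ _ H1) as H2.
  pose proof (length_ddiff1 _ _ H0) as L1. pose proof (length_ddiff2 _ _ H1) as L2.
  pose proof (length_ddiff1 _ _ H2) as L3. simpl length in L1.
  replace (2 ^ (21 * s + 36))%nat
    with (1 * 2 ^ (3 * (s + 1) + 1) * 2 ^ (3 * (2 * (s + 1) + 1) + 1)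
            * 2 ^ (3 * (2 * (2 * (s + 1) + 1) + 1) + 1))%nat
    by (rewrite Nat.mul_1_l, <- !Nat.pow_add_r; f_equal; lia).
  unfold weyl_quot. eapply Nat.le_trans; [exact L3|].
  apply Nat.mul_le_mono_r. eapply Nat.le_trans; [exact L2|].
  now apply Nat.mul_le_mono_r.
Qed.

Lemma Cmod_weyl_quot_sub_le (n1 n2 : Z) (x y : C) (d : R) :
  (Cmod (x - 1) <= d)%R -> (Cmod (y - 1) <= d)%R -> (d <= / 2)%R ->
  (Cmod (leval (weyl_quot n1 n2) x y - weyl_value n1 n2) <= d * 2 ^ (45 * abs_sum n1 n2 + 83))%R.
Proof.
  intros Hx Hy Hd. rewrite <- leval_weyl_quot_1_1.
  eapply Rle_trans; [apply (Cmod_leval_sub_le _ _ x y d (lbounded_weyl_quot n1 n2)); auto|].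
  pose proof (le_INR _ _ (length_weyl_quot n1 n2)) as HL.
  rewrite pow_INR in HL. replace (INR 2) with 2%R in HL by (simpl; ring).
  replace (45 * abs_sum n1 n2 + 83)%nat
    with (21 * abs_sum n1 n2 + 36 + (3 * (8 * abs_sum n1 n2 + 15) + 2))%nat by lia.
  rewrite (pow_add 2 (21 * abs_sum n1 n2 + 36)).
  pose proof (Cmod_ge_0 (x - 1)).
  pose proof (pow_le 2 (3 * (8 * abs_sum n1 n2 + 15) + 2) ltac:(lra)).
  rewrite Rmult_comm, Rmult_assoc. apply Rmult_le_compat_l; [lra|].
  rewrite Rmult_comm. apply Rmult_le_compat_r; assumption.
Qed.

Lemma Rabs_weyl_value_le (n1 n2 : Z) : (Rabs (weyl_value n1 n2) <= 2 ^ (45 * abs_sum n1 n2 + 83))%R.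
Proof.
  rewrite <- Cmod_R, <- leval_weyl_quot_1_1.
  eapply Rle_trans; [apply (Cmod_leval_1_1_le _ _ (lbounded_weyl_quot n1 n2))|].
  pose proof (le_INR _ _ (length_weyl_quot n1 n2)) as HL. rewrite pow_INR in HL.
  eapply Rle_trans; [exact HL|]. apply Rle_pow; [simpl; lra | lia].
Qed.

Lemma leval_weyl_quot (x y : C) (n1 n2 : Z) :
  x <> 0 -> y <> 0 -> x <> 1 -> y <> 1 -> x * y <> 1 ->
  leval (weyl_quot n1 n2) x y = weyl_num x y n1 n2 / weyl_den x y.
Proof.
  intros Hx Hy Hx1 Hy1 Hxy1.
  assert (Hden : weyl_den x y <> 0).
  { unfold weyl_den. replace (/ x * / y) with (/ (x * y)) by (field; auto).
    repeat apply Cmult_neq_0; apply one_sub_inv_neq_0; auto using Cmult_neq_0. }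
  rewrite <- weyl_den_mul_quot by auto. field. exact Hden.
Qed.

(** * Series over Z^2 summed along squares *)

Definition zsum {G : AbelianMonoid} (g : Z -> G) (N : nat) : G :=
  sum_n (fun i => g (Z.of_nat i - Z.of_nat N)%Z) (2 * N).

Lemma psum2_zsum (f : Z -> Z -> C) N : psum2 f N = zsum (fun i => zsum (f i) N) N.
Proof. reflexivity. Qed.

Lemma sum_n_S_shift {G : AbelianMonoid} (a : nat -> G) n :
  sum_n a (S n) = plus (a O) (sum_n (fun i => a (S i)) n).
Proof.
  unfold sum_n. rewrite sum_Sn_m by lia. f_equal. now rewrite sum_n_m_S.
Qed.

Lemma zsum_S {G : AbelianMonoid} (g : Z -> G) N :
  zsum g (S N) = plus (plus (g (- (Z.of_nat N + 1))%Z) (zsum g N)) (g (Z.of_nat N + 1)%Z).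
Proof.
  unfold zsum. replace (2 * S N)%nat with (S (S (2 * N))) by lia.
  rewrite sum_Sn, sum_n_S_shift. f_equal; [f_equal|].
  - f_equal. lia.
  - apply sum_n_ext. intros i. f_equal. lia.
  - f_equal. lia.
Qed.

Lemma zsumC_ext (g h : Z -> C) N : (forall i, g i = h i) -> zsum g N = zsum h N.
Proof. intros H. apply sum_n_ext. intros. apply H. Qed.

Lemma zsumR_ext (g h : Z -> R) N : (forall i, g i = h i) -> zsum g N = zsum h N.
Proof. intros H. apply sum_n_ext. intros. apply H. Qed.

Lemma zsum_plus {G : AbelianMonoid} (g h : Z -> G) N :
  zsum (fun i => plus (g i) (h i)) N = plus (zsum g N) (zsum h N).
Proof. apply sum_n_plus. Qed.

Lemma zsum_mult_l {K : Ring} (k : K) (g : Z -> K) N :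
  zsum (fun i => mult k (g i)) N = mult k (zsum g N).
Proof. apply sum_n_mult_l. Qed.

Lemma norm_zsum_le {K : AbsRing} {V : NormedModule K} (g : Z -> V) N :
  norm (zsum g N) <= zsum (fun i => norm (g i)) N.
Proof. apply norm_sum_n_m. Qed.

Lemma zsum_le (g h : Z -> R) N : (forall i, g i <= h i) -> zsum g N <= zsum h N.
Proof. intros H. apply sum_n_m_le. intros. apply H. Qed.

Lemma zsum_nonneg (g : Z -> R) N : (forall i, 0 <= g i) -> 0 <= zsum g N.
Proof.
  intros H. apply Rle_trans with (zsum (fun _ => 0%R) N).
  - right. unfold zsum. now rewrite sum_n_const, Rmult_0_r.
  - now apply zsum_le.
Qed.

Lemma zsumC_S (g : Z -> C) N :
  zsum g (S N) = g (- (Z.of_nat N + 1))%Z + zsum g N + g (Z.of_nat N + 1)%Z.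
Proof. exact (zsum_S g N). Qed.

Lemma zsumR_S (g : Z -> R) N :
  zsum g (S N) = (g (- (Z.of_nat N + 1))%Z + zsum g N + g (Z.of_nat N + 1)%Z)%R.
Proof. exact (zsum_S g N). Qed.

Lemma zsumC_plus (g h : Z -> C) N : zsum (fun i => g i + h i) N = zsum g N + zsum h N.
Proof. exact (zsum_plus g h N). Qed.

Lemma zsumR_mult_l (k : R) (g : Z -> R) N : zsum (fun i => k * g i)%R N = (k * zsum g N)%R.
Proof. exact (zsum_mult_l k g N). Qed.

Lemma Cmod_zsum_le (g : Z -> C) (w : Z -> R) N :
  (forall i, Cmod (g i) <= w i) -> Cmod (zsum g N) <= zsum w N.
Proof.
  intros H. eapply Rle_trans; [apply (@norm_zsum_le C_AbsRing C_NormedModule)|].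
  now apply zsum_le.
Qed.

Lemma zsum_le_S (v : Z -> R) N : (forall i, 0 <= v i) -> zsum v N <= zsum v (S N).
Proof.
  intros Hv. rewrite zsumR_S.
  pose proof (Hv (- (Z.of_nat N + 1))%Z). pose proof (Hv (Z.of_nat N + 1)%Z). lra.
Qed.

Section Majorant.

Variables (v : Z -> R) (K : R).

Lemma Cmod_psum2_le (f : Z -> Z -> C) N : (forall i j, Cmod (f i j) <= K * (v i * v j)) ->
  Cmod (psum2 f N) <= K * zsum v N ^ 2.
Proof.
  intros Hf. rewrite psum2_zsum.
  apply Rle_trans with (zsum (fun i => K * v i * zsum v N) N)%R.
  - apply Cmod_zsum_le. intros i. rewrite <- zsumR_mult_l.
    apply Cmod_zsum_le. intros j. rewrite Rmult_assoc. apply Hf.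
  - rewrite (zsumR_ext _ (fun i => (K * zsum v N) * v i)%R) by (intros; ring).
    rewrite zsumR_mult_l. right. ring.
Qed.

Lemma Cmod_psum2_S_sub_le (f : Z -> Z -> C) N : (forall i j, Cmod (f i j) <= K * (v i * v j)) ->
  Cmod (psum2 f (S N) - psum2 f N) <= K * (zsum v (S N) ^ 2 - zsum v N ^ 2).
Proof.
  intros Hf. set (m := (- (Z.of_nat N + 1))%Z). set (p := (Z.of_nat N + 1)%Z).
  assert (Hrow : forall i M, Cmod (zsum (f i) M) <= K * v i * zsum v M).
  { intros i M. rewrite <- zsumR_mult_l. apply Cmod_zsum_le. intros j.
    rewrite Rmult_assoc. apply Hf. }
  assert (Hcol : Cmod (zsum (fun i => f i m + f i p) N) <= K * (v m + v p) * zsum v N).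
  { rewrite <- zsumR_mult_l. apply Cmod_zsum_le. intros i.
    eapply Rle_trans; [apply Cmod_triangle|].
    pose proof (Hf i m). pose proof (Hf i p). nra. }
  assert (E : psum2 f (S N) - psum2 f N
              = zsum (f m) (S N) + zsum (f p) (S N) + zsum (fun i => f i m + f i p) N).
  { rewrite !psum2_zsum, zsumC_S.
    rewrite (zsumC_ext (fun i => zsum (f i) (S N)) (fun i => (f i m + f i p) + zsum (f i) N))
      by (intros; rewrite zsumC_S; fold m p; ring).
    rewrite zsumC_plus. fold m p. ring. }
  rewrite E. pose proof (Hrow m (S N)). pose proof (Hrow p (S N)).
  eapply Rle_trans; [apply Cmod_triangle|].
  eapply Rle_trans; [apply Rplus_le_compat_r, Cmod_triangle|].
  rewrite zsumR_S in *. fold m p in H, H0 |- *. nra.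
Qed.

End Majorant.

Lemma filterlim_of_shift {T : Type} (s : nat -> T) (F : (T -> Prop) -> Prop) :
  filterlim (fun n => s (S n)) eventually F -> filterlim s eventually F.
Proof.
  intros H P HP. destruct (H P HP) as [N HN]. exists (S N).
  intros [|n] Hn; [lia|]. apply HN. lia.
Qed.

Lemma ex_lim_of_dominated_increments (s : nat -> C) (t : nat -> R) (l : R) :
  (forall n, Cmod (s (S n) - s n) <= t (S n) - t n) -> is_lim_seq t l ->
  exists L, filterlim s eventually (locally L).
Proof.
  intros Hinc Ht.
  assert (Hb : ex_series (fun n => t (S n) - t n)%R).
  { exists (l - t O)%R.
    assert (H : is_lim_seq (sum_n (fun n => t (S n) - t n)%R) (l - t O)%R).
    { apply (is_lim_seq_ext (fun n => t (S n) - t O)%R).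
      - intros n. induction n as [|n IH]; rewrite ?sum_O, ?sum_Sn, <- ?IH; [ring|].
        change (plus ?a ?b) with (a + b)%R. ring.
      - apply is_lim_seq_minus'; [exact (proj1 (is_lim_seq_incr_1 t l) Ht) | apply is_lim_seq_const]. }
    exact H. }
  destruct (ex_series_le (V := C_CompleteNormedModule) (fun n => s (S n) - s n) _ Hinc Hb)
    as [L HL].
  exists (s O + L). apply filterlim_of_shift.
  apply (filterlim_ext (fun n => s O + sum_n (fun k => s (S k) - s k) n)).
  - intros n. induction n as [|n IH]; rewrite ?sum_O, ?sum_Sn; [ring|].
    change (plus ?a ?b) with (a + b). rewrite Cplus_assoc, IH. ring.
  - eapply filterlim_comp_2; [apply filterlim_const | exact HL | apply (filterlim_plus (s O) L)].
Qed.

Lemma is_lim_seq_Re_Im (s : nat -> C) (l : C) : filterlim s eventually (locally l) ->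
  is_lim_seq (fun n => Re (s n)) (Re l) /\ is_lim_seq (fun n => Im (s n)) (Im l).
Proof.
  intros H. split; apply (filterlim_locally (F := eventually)); intros eps;
    apply (filterlim_locally (F := eventually)) with (eps := eps) in H;
    revert H; apply filter_imp; intros n [Hre Him]; assumption.
Qed.

Lemma zsum2_eq (f : Z -> Z -> C) (l : C) : is_zsum2 f l -> zsum2 f = l.
Proof.
  intros H. destruct (is_lim_seq_Re_Im _ _ H) as [Hre Him]. unfold zsum2.
  rewrite (is_lim_seq_unique _ _ Hre), (is_lim_seq_unique _ _ Him). now destruct l.
Qed.

Lemma is_zsum2_ext (f g : Z -> Z -> C) (l : C) :
  (forall i j, f i j = g i j) -> is_zsum2 f l -> is_zsum2 g l.
Proof.
  intros H. apply filterlim_ext. intros N. rewrite !psum2_zsum.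
  apply zsumC_ext. intros i. apply zsumC_ext. intros j. apply H.
Qed.

Lemma is_zsum2_plus (f g : Z -> Z -> C) (l m : C) :
  is_zsum2 f l -> is_zsum2 g m -> is_zsum2 (fun i j => f i j + g i j) (l + m).
Proof.
  intros Hf Hg. unfold is_zsum2.
  apply (filterlim_ext (fun N => psum2 f N + psum2 g N)).
  - intros N. rewrite !psum2_zsum, <- zsumC_plus. apply zsumC_ext. intros i.
    now rewrite <- zsumC_plus.
  - eapply filterlim_comp_2; [exact Hf | exact Hg | apply (filterlim_plus l m)].
Qed.

Lemma is_zsum2_scal (c : C) (f : Z -> Z -> C) (l : C) :
  is_zsum2 f l -> is_zsum2 (fun i j => c * f i j) (c * l).
Proof.
  intros Hf. unfold is_zsum2.
  apply (filterlim_ext (fun N => c * psum2 f N)).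
  - intros N. rewrite !psum2_zsum. rewrite <- (zsum_mult_l (K := C_Ring)).
    apply zsumC_ext. intros i. now rewrite <- (zsum_mult_l (K := C_Ring)).
  - eapply filterlim_comp; [exact Hf | apply (filterlim_scal_r (V := C_NormedModule) c l)].
Qed.

Lemma Cmod_lim_le (s : nat -> C) (l : C) (M : R) :
  filterlim s eventually (locally l) -> (forall n, Cmod (s n) <= M) -> Cmod l <= M.
Proof.
  intros H HM.
  assert (Hn : is_lim_seq (fun n => Cmod (s n)) (Cmod l)).
  { eapply filterlim_comp; [exact H | exact (filterlim_norm (V := C_NormedModule) l)]. }
  apply (is_lim_seq_le _ _ _ _ HM Hn (is_lim_seq_const M)).
Qed.

Section Majorant_convergence.

Variables (v : Z -> R) (K T : R).
Hypothesis Hv : forall i, 0 <= v i.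
Hypothesis HT : forall N, zsum v N <= T.

Lemma ex_lim_zsum_sq : exists l : R, is_lim_seq (fun N => zsum v N ^ 2)%R l.
Proof.
  destruct (ex_finite_lim_seq_incr (zsum v) T (fun N => zsum_le_S v N Hv) HT) as [l Hl].
  exists (l * l)%R. apply (is_lim_seq_ext (fun N => zsum v N * zsum v N)%R); [intros; ring|].
  now apply is_lim_seq_mult'.
Qed.

Lemma is_zsum2_majorant (f : Z -> Z -> C) :
  (forall i j, Cmod (f i j) <= K * (v i * v j)) -> is_zsum2 f (zsum2 f).
Proof.
  intros Hf. destruct ex_lim_zsum_sq as [l Hl].
  destruct (ex_lim_of_dominated_increments (psum2 f) (fun N => K * zsum v N ^ 2)%R (K * l))
    as [L HL].
  - intros N. rewrite <- Rmult_minus_distr_l. now apply Cmod_psum2_S_sub_le.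
  - apply is_lim_seq_mult'; [apply is_lim_seq_const | exact Hl].
  - now rewrite (zsum2_eq _ _ HL).
Qed.

Lemma is_lim_seq_zsum_sq_increment : is_lim_seq (fun N => zsum v (S N) ^ 2 - zsum v N ^ 2)%R 0.
Proof.
  destruct ex_lim_zsum_sq as [l Hl]. replace 0%R with (l - l)%R by ring.
  apply is_lim_seq_minus'; [exact (proj1 (is_lim_seq_incr_1 _ l) Hl) | exact Hl].
Qed.

End Majorant_convergence.

(* The sum over [-N, N+1], an interval stable under [i |-> 1 - i]. *)
Definition zsum_half {G : AbelianMonoid} (g : Z -> G) (N : nat) : G :=
  sum_n (fun i => g (Z.of_nat i - Z.of_nat N)%Z) (S (2 * N)).

Lemma zsum_half_eq (g : Z -> C) N : zsum_half g N = zsum g N + g (Z.of_nat N + 1)%Z.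
Proof.
  unfold zsum_half. rewrite sum_Sn. change (plus ?a ?b) with (a + b).
  f_equal. f_equal. lia.
Qed.

Lemma sum_n_rev {G : AbelianMonoid} (a : nat -> G) n :
  sum_n a n = sum_n (fun i => a (n - i)%nat) n.
Proof.
  induction n as [|n IH]; [reflexivity|].
  rewrite sum_Sn, (sum_n_S_shift (fun i => a (S n - i)%nat)), IH, Nat.sub_0_r, plus_comm.
  reflexivity.
Qed.

Lemma zsum_half_reflect {G : AbelianMonoid} (g : Z -> G) N :
  zsum_half g N = zsum_half (fun i => g (1 - i)%Z) N.
Proof.
  unfold zsum_half. rewrite sum_n_rev. apply sum_n_ext_loc. intros i Hi. f_equal. lia.
Qed.

Lemma zsum_half_opp (g : Z -> C) N : (zsum_half (fun i => - g i) N : C) = - zsum_half g N.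
Proof.
  unfold zsum_half. induction (S (2 * N)) as [|n IH]; rewrite ?sum_O, ?sum_Sn, ?IH; [reflexivity|].
  change (plus ?a ?b) with (a + b). ring.
Qed.

Lemma psum2_antisym (g : Z -> Z -> C) N :
  (forall i j, g (1 - i)%Z (1 - j)%Z = - g i j) ->
  psum2 g N = - (zsum (g (Z.of_nat N + 1)%Z) N + zsum_half (fun i => g i (Z.of_nat N + 1)%Z) N).
Proof.
  intros Hanti. set (p := (Z.of_nat N + 1)%Z).
  set (W := zsum_half (fun i => zsum_half (g i) N) N : C).
  assert (HW : W = - W).
  { unfold W. rewrite <- zsum_half_opp, (zsum_half_reflect (fun i => zsum_half (g i) N)).
    apply sum_n_ext. intros i. rewrite <- zsum_half_opp, zsum_half_reflect.
    apply sum_n_ext. intros j. apply Hanti. }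
  assert (HW0 : W = 0).
  { transitivity ((W - - W) / 2); [|rewrite <- HW; unfold Cminus; rewrite Cplus_opp_r];
      field; apply RtoC_neq; lra. }
  assert (HWsplit : W = psum2 g N + zsum (g p) N + zsum_half (fun i => g i p) N).
  { unfold W. rewrite psum2_zsum, <- zsum_half_eq.
    transitivity (zsum_half (fun i => zsum (g i) N + g i p) N).
    - apply sum_n_ext. intros i. apply zsum_half_eq.
    - exact (sum_n_plus _ _ _). }
  rewrite HW0 in HWsplit.
  transitivity (psum2 g N + zsum (g p) N + zsum_half (fun i => g i p) N
                - (zsum (g p) N + zsum_half (fun i => g i p) N)); [ring|].
  rewrite <- HWsplit. ring.
Qed.

Section Antisymmetric.

Variables (v : Z -> R) (K T : R) (g : Z -> Z -> C).
Hypothesis Hv : forall i, 0 <= v i.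
Hypothesis HK : 0 <= K.
Hypothesis Hg : forall i j, Cmod (g i j) <= K * (v i * v j).
Hypothesis Hanti : forall i j, g (1 - i)%Z (1 - j)%Z = - g i j.

Lemma Cmod_psum2_antisym_le N : Cmod (psum2 g N) <= K * (zsum v (S N) ^ 2 - zsum v N ^ 2).
Proof.
  rewrite psum2_antisym, Cmod_opp by exact Hanti. set (p := (Z.of_nat N + 1)%Z).
  assert (Hrow : Cmod (zsum (g p) N) <= K * v p * zsum v N).
  { rewrite <- zsumR_mult_l. apply Cmod_zsum_le. intros j. rewrite Rmult_assoc. apply Hg. }
  assert (Hcol : Cmod (zsum_half (fun i => g i p) N) <= K * v p * (zsum v N + v p)).
  { rewrite zsum_half_eq. eapply Rle_trans; [apply Cmod_triangle|].
    rewrite Rmult_plus_distr_l, <- zsumR_mult_l. apply Rplus_le_compat.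
    - apply Cmod_zsum_le. intros i. rewrite Rmult_assoc, (Rmult_comm (v p)). apply Hg.
    - rewrite Rmult_assoc. apply Hg. }
  pose proof (zsum_nonneg v N Hv). pose proof (Hv p).
  eapply Rle_trans; [apply Cmod_triangle|].
  eapply Rle_trans; [apply Rplus_le_compat; [exact Hrow | exact Hcol]|].
  rewrite zsumR_S. fold p.
  apply Rle_trans with (K * (v p * (2 * zsum v N + v p)))%R; [right; ring|].
  apply Rmult_le_compat_l; [exact HK|].
  pose proof (Hv (- p)%Z). set (m := v (- p)%Z) in *.
  assert (0 <= m * (m + 2 * v p + 2 * zsum v N))%R by (apply Rmult_le_pos; lra).
  nra.
Qed.

Hypothesis HT : forall N, zsum v N <= T.

Lemma is_zsum2_antisym : is_zsum2 g 0.
Proof.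
  apply (filterlim_norm_zero (V := C_NormedModule)).
  assert (H : is_lim_seq (fun N => Cmod (psum2 g N)) 0).
  { apply (is_lim_seq_le_le (fun _ => 0%R) _ (fun N => K * (zsum v (S N) ^ 2 - zsum v N ^ 2))%R).
    - intros N. split; [apply Cmod_ge_0 | apply Cmod_psum2_antisym_le].
    - apply is_lim_seq_const.
    - replace (Finite 0) with (Rbar_mult K 0) by (simpl; f_equal; ring).
      apply is_lim_seq_scal_l. now apply (is_lim_seq_zsum_sq_increment v T). }
  exact H.
Qed.

End Antisymmetric.

(** * The Gaussian majorant *)

Lemma Cmod_qpow (tau : C) (x : R) : Cmod (qpow tau x) = exp (- (2 * PI * Im tau * x)).
Proof.
  unfold qpow, Cmod. cbv zeta. cbn [fst snd].
  set (e := exp (- (2 * PI * Im tau * x))). set (t := (2 * PI * Re tau * x)%R).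
  replace ((e * cos t) ^ 2 + (e * sin t) ^ 2)%R with (e * e)%R.
  - apply sqrt_square. left. apply exp_pos.
  - pose proof (sin2_cos2 t) as H. unfold Rsqr in H.
    transitivity (e * e * (sin t * sin t + cos t * cos t))%R; [rewrite H|]; ring.
Qed.

Lemma exp_le_compat (a b : R) : (a <= b)%R -> (exp a <= exp b)%R.
Proof. intros [H | ->]; [left; now apply exp_increasing | right; reflexivity]. Qed.

Definition gauss (c : R) (i : Z) : R := exp (- (c * (IZR i - / 2) ^ 2)).

Lemma Cmod_qpow_le_gauss (tau : C) (n1 n2 : Z) : (0 < Im tau)%R ->
  (Cmod (qpow tau (2 * Qf (IZR n1 - / 2) (IZR n2 - / 2))) <=
   gauss (2 * PI * Im tau) n1 * gauss (2 * PI * Im tau) n2)%R.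
Proof.
  intros Ht. rewrite Cmod_qpow. unfold gauss. rewrite <- exp_plus.
  apply exp_le_compat. unfold Qf. pose proof PI_RGT_0.
  assert (0 < 2 * PI * Im tau)%R by (apply Rmult_lt_0_compat; lra).
  pose proof (pow2_ge_0 (IZR n1 - IZR n2)). nra.
Qed.

Definition majorant (A c : R) (i : Z) : R := (A ^ Z.abs_nat i * gauss c i)%R.

(* The maximum over real [k] of [(2 A)^k exp (- c (k - 1/2)^2)]. *)
Definition gauss_peak (A c : R) : R := exp (ln (2 * A) / 2 + ln (2 * A) ^ 2 / (4 * c)).

Lemma majorant_nonneg (A c : R) (i : Z) : (0 <= A)%R -> (0 <= majorant A c i)%R.
Proof.
  intros HA. unfold majorant, gauss. apply Rmult_le_pos; [now apply pow_le | left; apply exp_pos].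
Qed.

Lemma pow_mul_gauss_le (A c : R) (k : nat) : (1 <= A)%R -> (0 < c)%R ->
  ((2 * A) ^ k * exp (- (c * (INR k - / 2) ^ 2)) <= gauss_peak A c)%R.
Proof.
  intros HA Hc. unfold gauss_peak. set (a := ln (2 * A)).
  rewrite <- Rpower_pow by lra. unfold Rpower. fold a. rewrite <- exp_plus.
  apply exp_le_compat. apply (Rmult_le_reg_l (4 * c)); [lra|].
  replace (4 * c * (a / 2 + a ^ 2 / (4 * c)))%R with (2 * c * a + a ^ 2)%R by (field; lra).
  pose proof (pow2_ge_0 (2 * c * (INR k - / 2) - a)). nra.
Qed.

Lemma majorant_le_geom (A c : R) (i : Z) : (1 <= A)%R -> (0 < c)%R ->
  (majorant A c i <= gauss_peak A c * (/ 2) ^ Z.abs_nat i)%R.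
Proof.
  intros HA Hc. unfold majorant, gauss. set (k := Z.abs_nat i).
  assert (Hk : (exp (- (c * (IZR i - / 2) ^ 2)) <= exp (- (c * (INR k - / 2) ^ 2)))%R).
  { apply exp_le_compat. unfold k. rewrite INR_IZR_INZ, Nat2Z.inj_abs_nat, abs_IZR.
    destruct (Rle_or_lt 0 (IZR i)); [rewrite Rabs_right by lra; lra | rewrite Rabs_left by lra; nra]. }
  pose proof (pow_mul_gauss_le A c k HA Hc) as G.
  rewrite Rpow_mult_distr in G.
  assert (H2 : (2 ^ k * (/ 2) ^ k = 1)%R) by (rewrite <- Rpow_mult_distr, Rinv_r, pow1; lra).
  pose proof (pow_le A k ltac:(lra)). pose proof (pow_lt (/ 2) k ltac:(lra)).
  apply Rle_trans with (A ^ k * exp (- (c * (INR k - / 2) ^ 2)))%R;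
    [now apply Rmult_le_compat_l|].
  replace (A ^ k * exp (- (c * (INR k - / 2) ^ 2)))%R
    with (2 ^ k * A ^ k * exp (- (c * (INR k - / 2) ^ 2)) * (/ 2) ^ k)%R
    by (rewrite <- (Rmult_1_l (A ^ k * _)), <- H2; ring).
  now apply Rmult_le_compat_r; [lra|].
Qed.

Lemma zsum_geom_half (N : nat) : zsum (fun i => (/ 2) ^ Z.abs_nat i)%R N = (3 - 2 * (/ 2) ^ N)%R.
Proof.
  induction N as [|N IH]; [unfold zsum; simpl; rewrite sum_O; simpl; ring|].
  rewrite zsumR_S, IH.
  replace (Z.abs_nat (- (Z.of_nat N + 1))) with (S N) by lia.
  replace (Z.abs_nat (Z.of_nat N + 1)) with (S N) by lia.
  simpl. field.
Qed.

Lemma zsum_majorant_le (A c : R) (N : nat) : (1 <= A)%R -> (0 < c)%R ->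
  (zsum (majorant A c) N <= 3 * gauss_peak A c)%R.
Proof.
  intros HA Hc.
  apply Rle_trans with (zsum (fun i => gauss_peak A c * (/ 2) ^ Z.abs_nat i)%R N).
  - apply zsum_le. intros i. now apply majorant_le_geom.
  - rewrite zsumR_mult_l, zsum_geom_half. pose proof (exp_pos (ln (2 * A) / 2 + ln (2 * A) ^ 2 / (4 * c))).
    pose proof (pow_lt (/ 2) N ltac:(lra)). unfold gauss_peak. nra.
Qed.

Definition qexp (n1 n2 : Z) : R := (2 * Qf (IZR n1 - / 2) (IZR n2 - / 2))%R.

Definition rhs_poly (n1 n2 : Z) : R :=
  (12 * IZR n1 * IZR n2 - 3 * IZR n1 ^ 2 - 3 * IZR n2 ^ 2 - IZR n1 - IZR n2)%R.

Definition weyl_value_term (tau : C) (n1 n2 : Z) : C := RtoC (weyl_value n1 n2) * qpow tau (qexp n1 n2).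

Lemma RHS_term_eq (tau : C) (n1 n2 : Z) : RHS_term tau n1 n2 = RtoC (rhs_poly n1 n2) * qpow tau (qexp n1 n2).
Proof. reflexivity. Qed.

Lemma F_term_eq (tau x y : C) (n1 n2 : Z) :
  F_term tau x y n1 n2 = qpow tau (qexp n1 n2) * (weyl_num x y n1 n2 / weyl_den x y).
Proof. reflexivity. Qed.

Lemma qexp_reflect (n1 n2 : Z) : qexp (1 - n1) (1 - n2) = qexp n1 n2.
Proof. unfold qexp, Qf. rewrite !minus_IZR. field. Qed.

Lemma weyl_value_sub_rhs_poly_reflect (n1 n2 : Z) :
  (weyl_value (1 - n1) (1 - n2) - / 4 * rhs_poly (1 - n1) (1 - n2) = - (weyl_value n1 n2 - / 4 * rhs_poly n1 n2))%R.
Proof. unfold weyl_value, rhs_poly. rewrite !minus_IZR. field. Qed.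

Lemma Rabs_rhs_poly_le (n1 n2 : Z) : (Rabs (rhs_poly n1 n2) <= 2 ^ (45 * abs_sum n1 n2 + 83))%R.
Proof.
  set (s := abs_sum n1 n2).
  assert (Hs : (Rabs (IZR n1) + Rabs (IZR n2) = INR s)%R).
  { unfold s, abs_sum. rewrite plus_INR, !INR_IZR_INZ, !Nat2Z.inj_abs_nat, !abs_IZR. reflexivity. }
  assert (HP : (Rabs (rhs_poly n1 n2) <= 7 * (INR s + 1) ^ 2)%R).
  { unfold rhs_poly. rewrite <- Hs. pose proof (Rabs_pos (IZR n1)). pose proof (Rabs_pos (IZR n2)).
    destruct (Rcase_abs (IZR n1)), (Rcase_abs (IZR n2));
      [rewrite (Rabs_left (IZR n1)), (Rabs_left (IZR n2)) by lra
      |rewrite (Rabs_left (IZR n1)), (Rabs_right (IZR n2)) by lra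
      |rewrite (Rabs_right (IZR n1)), (Rabs_left (IZR n2)) by lra
      |rewrite (Rabs_right (IZR n1)), (Rabs_right (IZR n2)) by lra];
      apply Rabs_le; split; nra. }
  pose proof (INR_succ_le_pow2 s). pose proof (pos_INR s).
  assert ((INR s + 1) ^ 2 <= 2 ^ (2 * s))%R
    by (rewrite Nat.mul_comm, pow_mult; apply pow_incr; lra).
  eapply Rle_trans; [exact HP|].
  replace (45 * s + 83)%nat with (2 * s + (43 * s + 83))%nat by lia. rewrite pow_add.
  assert (8 <= 2 ^ (43 * s + 83))%R.
  { replace 8%R with (2 ^ 3)%R by ring. apply Rle_pow; [lra | lia]. }
  pose proof (pow_le 2 (2 * s) ltac:(lra)). nra.
Qed.

Section Fixed_tau.

Variable tau : C.
Hypothesis Htau : (0 < Im tau)%R.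

(* The constants [2^45] and [2^83] come from the bounds [2 ^ (45 |n| + 83)] on the Weyl
   quotient and on the polynomials. *)
Let c : R := (2 * PI * Im tau)%R.
Let v : Z -> R := majorant (2 ^ 45) c.
Let T : R := (3 * gauss_peak (2 ^ 45) c)%R.

Let Hc : (0 < c)%R.
Proof. unfold c. pose proof PI_RGT_0. apply Rmult_lt_0_compat; lra. Qed.

Let Hv : forall i, (0 <= v i)%R.
Proof. intros i. apply majorant_nonneg. apply pow_le. lra. Qed.

Let HT : forall N, (zsum v N <= T)%R.
Proof. intros N. apply zsum_majorant_le; [apply pow_R1_Rle; lra | exact Hc]. Qed.

Lemma Cmod_mul_qpow_le (w : C) (n1 n2 : Z) (M : R) :
  (0 <= M)%R -> (Cmod w <= M * 2 ^ (45 * abs_sum n1 n2 + 83))%R ->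
  (Cmod (w * qpow tau (qexp n1 n2)) <= M * 2 ^ 83 * (v n1 * v n2))%R.
Proof.
  intros HM Hw. rewrite Cmod_mult. pose proof (Cmod_qpow_le_gauss tau n1 n2 Htau) as Hq.
  replace (M * 2 ^ 83 * (v n1 * v n2))%R
    with (M * 2 ^ (45 * abs_sum n1 n2 + 83) * (gauss c n1 * gauss c n2))%R.
  - apply Rmult_le_compat; auto using Cmod_ge_0.
  - unfold v, majorant, abs_sum. rewrite Nat.mul_add_distr_l, !pow_add, <- !pow_mult. ring.
Qed.

Lemma is_zsum2_RHS_term : is_zsum2 (RHS_term tau) (zsum2 (RHS_term tau)).
Proof.
  apply (is_zsum2_majorant v (1 * 2 ^ 83) T Hv HT). intros i j.
  rewrite RHS_term_eq. apply Cmod_mul_qpow_le; [lra|].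
  rewrite Cmod_R, Rmult_1_l. apply Rabs_rhs_poly_le.
Qed.

Lemma is_zsum2_weyl_value_term : is_zsum2 (weyl_value_term tau) (zsum2 (weyl_value_term tau)).
Proof.
  apply (is_zsum2_majorant v (1 * 2 ^ 83) T Hv HT). intros i j.
  apply Cmod_mul_qpow_le; [lra|]. rewrite Cmod_R, Rmult_1_l. apply Rabs_weyl_value_le.
Qed.

Lemma zsum2_weyl_value_term : zsum2 (weyl_value_term tau) = / 4 * zsum2 (RHS_term tau).
Proof.
  set (g := fun i j => RtoC (weyl_value i j - / 4 * rhs_poly i j) * qpow tau (qexp i j)).
  assert (Hg : forall i j, (Cmod (g i j) <= 2 * 2 ^ 83 * (v i * v j))%R).
  { intros i j. apply Cmod_mul_qpow_le; [lra|]. rewrite Cmod_R.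
    pose proof (Rabs_weyl_value_le i j). pose proof (Rabs_rhs_poly_le i j).
    eapply Rle_trans; [apply Rabs_triang|]. rewrite Rabs_Ropp, Rabs_mult, (Rabs_right (/ 4)) by lra.
    pose proof (Rabs_pos (rhs_poly i j)). lra. }
  assert (Hanti : forall i j, g (1 - i)%Z (1 - j)%Z = - g i j).
  { intros i j. unfold g. rewrite weyl_value_sub_rhs_poly_reflect, qexp_reflect, RtoC_opp. ring. }
  pose proof (is_zsum2_antisym v (2 * 2 ^ 83) T g Hv ltac:(lra) Hg Hanti HT) as H0.
  assert (H1 : is_zsum2 g (zsum2 (weyl_value_term tau) + RtoC (- / 4) * zsum2 (RHS_term tau))).
  { eapply is_zsum2_ext;
      [|exact (is_zsum2_plus _ _ _ _ is_zsum2_weyl_value_term (is_zsum2_scal _ _ _ is_zsum2_RHS_term))].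
    intros i j. unfold g, weyl_value_term. rewrite RHS_term_eq, RtoC_minus, !RtoC_mult, RtoC_opp. ring. }
  apply zsum2_eq in H0. apply zsum2_eq in H1. rewrite H0 in H1.
  rewrite RtoC_opp, RtoC_inv in H1 by lra.
  transitivity (zsum2 (weyl_value_term tau) + - / 4 * zsum2 (RHS_term tau) + / 4 * zsum2 (RHS_term tau));
    [ring | rewrite <- H1; ring].
Qed.

Lemma Cmod_F_sub_le (x y : C) (d : R) : F_dom (x, y) ->
  (Cmod (x - 1) <= d)%R -> (Cmod (y - 1) <= d)%R -> (d <= / 2)%R ->
  (Cmod (F tau x y - zsum2 (weyl_value_term tau)) <= d * (2 ^ 83 * T ^ 2))%R.
Proof.
  intros [Hx [Hy [Hx1 [Hy1 Hxy1]]]] Hdx Hdy Hd. cbn [fst snd] in *.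
  pose proof (Cmod_ge_0 (x - 1)).
  set (h := fun i j => (leval (weyl_quot i j) x y - weyl_value i j) * qpow tau (qexp i j)).
  assert (Hh : forall i j, (Cmod (h i j) <= d * 2 ^ 83 * (v i * v j))%R)
    by (intros i j; apply Cmod_mul_qpow_le; [lra | now apply Cmod_weyl_quot_sub_le]).
  pose proof (is_zsum2_majorant v _ T Hv HT h Hh) as Hhs.
  assert (HF : is_zsum2 (F_term tau x y) (zsum2 h + zsum2 (weyl_value_term tau))).
  { eapply is_zsum2_ext; [|exact (is_zsum2_plus _ _ _ _ Hhs is_zsum2_weyl_value_term)].
    intros i j. unfold h, weyl_value_term. rewrite F_term_eq, <- leval_weyl_quot by auto. ring. }
  unfold F. rewrite (zsum2_eq _ _ HF).
  replace (zsum2 h + zsum2 (weyl_value_term tau) - zsum2 (weyl_value_term tau)) with (zsum2 h) by ring.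
  apply (Cmod_lim_le _ _ _ Hhs). intros N.
  eapply Rle_trans; [exact (Cmod_psum2_le v _ h N Hh)|].
  pose proof (zsum_nonneg v N Hv). pose proof (HT N). pose proof (pow_lt 2 83 ltac:(lra)).
  rewrite Rmult_assoc. apply Rmult_le_compat_l; [lra|].
  apply Rmult_le_compat_l; [lra|]. apply pow_incr. lra.
Qed.

End Fixed_tau.

Lemma filterlim_at_1_1_of_bound (G : C -> C -> C) (P : C * C -> Prop) (l : C) (M : R) :
  (0 <= M)%R ->
  (forall x y d, P (x, y) -> (Cmod (x - 1) <= d)%R -> (Cmod (y - 1) <= d)%R -> (d <= / 2)%R ->
     (Cmod (G x y - l) <= d * M)%R) ->
  filterlim (fun z => G (fst z) (snd z)) (within P (locally (RtoC 1, RtoC 1))) (locally l).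
Proof.
  intros HM HG. apply (filterlim_locally (F := within P _)). intros eps.
  set (nf := @norm_factor C_AbsRing C_NormedModule).
  pose proof (norm_factor_gt_0 (K := C_AbsRing) (V := C_NormedModule)) as Hnf. fold nf in Hnf.
  set (d := Rmin (/ 2) (eps / (M + 1))).
  assert (Hd : (0 < d)%R).
  { apply Rmin_glb_lt; [lra|]. apply Rdiv_lt_0_compat; [apply cond_pos | lra]. }
  exists (mkposreal (d / nf) (Rdiv_lt_0_compat _ _ Hd Hnf)).
  intros [x y] [Hbx Hby] Hxy. cbn [fst snd] in *.
  apply (norm_compat2 (V := C_NormedModule)) in Hbx.
  apply (norm_compat2 (V := C_NormedModule)) in Hby. simpl pos in Hbx, Hby. fold nf in Hbx, Hby.
  replace (nf * (d / nf))%R with d in Hbx, Hby by (field; lra).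
  apply (norm_compat1 (V := C_NormedModule)).
  assert (HdM : (d * M < eps)%R).
  { pose proof (cond_pos eps). pose proof (Rmin_r (/ 2) (eps / (M + 1))). fold d in H0.
    apply Rle_lt_trans with (eps / (M + 1) * M)%R; [apply Rmult_le_compat_r; lra|].
    apply (Rmult_lt_reg_r (M + 1)); [lra|].
    replace (eps / (M + 1) * M * (M + 1))%R with (eps * M)%R by (field; lra). nra. }
  eapply Rle_lt_trans; [apply (HG x y d Hxy); try (left; assumption)|exact HdM].
  apply Rmin_l.
Qed.

Theorem proposition6p1 (tau : C) (Htau : 0 < Im tau) :
  is_zsum2 (RHS_term tau) (zsum2 (RHS_term tau)) /\
  filterlim (fun z : C * C => F tau (fst z) (snd z))
    (within F_dom (locally (RtoC 1, RtoC 1)))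
    (locally (/ 4 * zsum2 (RHS_term tau))).
Proof.
  split; [exact (is_zsum2_RHS_term tau Htau)|].
  rewrite <- (zsum2_weyl_value_term tau Htau).
  eapply filterlim_at_1_1_of_bound; [|exact (Cmod_F_sub_le tau Htau)].
  apply Rmult_le_pos; [apply pow_le; lra | apply pow2_ge_0].
Qed.
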